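(* Let $X_N\subseteq\mathbb{R}^n\times\mathcal{N}$ be the feasibility domain of the terminal-set EMPC problem $\mathbb{P}_T$ below, and suppose there exist a control law $\kappa_f:\mathbb{R}^n\times\mathcal{N}\to\mathbb{R}^m$ and a family of sets $X^f=\{X^f_i\}_{i\in\mathcal{N}}$ that is uniformly positive invariant for the constrained system in closed loop with $\kappa_f$. Then $X_N$ is uniformly positive invariant for the MPC-controlled system $x_{k+1}=f(x_k,\hat\kappa_N(x_k,\theta_k),\theta_k)$, i.e., if $(x_k,\theta_k)\in X_N$ then $(x_{k+1},\theta_{k+1})\in X_N$ for every $\theta_{k+1}\in\mathcal{C}(\theta_k)$.
   Context: Setting: $\mathcal{N}=\{1,\dots,\nu\}$; $\{\theta_k\}$ a time-homogeneous, irreducible, aperiodic Markov chain on $\mathcal{N}$ with transition matrix $P=(p_{ij})$ on a filtered probability space $(\Omega,\mathfrak{F},\{\mathfrak{F}_k\},\mathbb{P})$, $\mathfrak{F}_k$ generated by the history up to time $k$; system $x_{k+1}=f(x_k,u_k,\theta_k)$, $x_k\in\mathbb{R}^n$, $u_k\in\mathbb{R}^m$, with $x_k,\theta_k$ measured at time $k$; constraints $(x_k,u_k)\in Y_{\theta_k}$ ($Y_\theta$ nonempty compact); stage cost $\ell$ with each $\ell(\cdot,\cdot,\theta)$ nonnegative, lower semicontinuous, level-bounded in $u$ locally uniformly in $x$; $f(\cdot,\cdot,\theta)$ continuous. $u\lhd\mathfrak{F}_k$ means $\mathfrak{F}_k$-measurable. Cover $\mathcal{C}(i)=\{j:p_{ij}>0\}$.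 Uniform positive invariance: a family of nonempty sets $C=\{C_i\}_{i\in\mathcal{N}}$ is UPI for a constrained closed-loop Markovian switching system if $x_k\in C_{\theta_k}$ implies $x_{k+1}\in C_{\theta_{k+1}}$ (for every possible successor mode), with the state-input constraints satisfied. Terminal-set problem $\mathbb{P}_T(x,\theta)$, with a terminal penalty $V_f:\mathbb{R}^n\times\mathcal{N}\to\mathbb{R}$: $V_N^\star(x,\theta)=\inf_{\mathbf{u}_N}\mathbb{E}[V_f(x_N,\theta_N)+\sum_{j=0}^{N-1}\ell(x_j,u_j,\theta_j)\mid\mathfrak{F}_0]$ subject to, for $k=0,\dots,N-1$: $x_{k+1}=f(x_k,u_k,\theta_k)$, $(x_k,u_k)\in Y_{\theta_k}$, $(x_0,\theta_0)=(x,\theta)$, $x_N\in X^f_{\theta_N}$, $u_k\lhd\mathfrak{F}_k$. $\hat\kappa_N(x,\theta)$ is the first element of an optimal policy. *)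

From HB Require Import structures.
From mathcomp Require Import all_boot all_order all_algebra.
From mathcomp Require Import all_classical all_reals all_analysis.
Set Implicit Arguments. Unset Strict Implicit. Unset Printing Implicit Defensive.
Import Order.TTheory GRing.Theory Num.Theory.
Import numFieldNormedType.Exports.
Local Open Scope classical_set_scope.
Local Open Scope ring_scope.

Section MPC.
Variables (R : realType) (n m nu : nat).

(* modes N = {1..nu} are represented by 'I_nu *)
Notation mode := 'I_nu.
Notation state := 'rV[R]_n.
Notation input := 'rV[R]_m.

Definition stochastic (P : 'M[R]_nu) :=
  (forall i j, 0 <= P i j) /\ (forall i, \sum_j P i j = 1).

Definition irreducible (P : 'M[R]_nu) :=
  forall i j : mode, exists k : nat, (0 < k)%N /\ 0 < (P ^+ k) i j.

Definition aperiodic (P : 'M[R]_nu) :=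
  forall i : mode, forall d : nat,
    (forall k : nat, (0 < k)%N -> 0 < (P ^+ k) i i -> (d %| k)%N) -> d = 1%N.

Definition level_bounded_u_loc_unif (l : state -> input -> R) :=
  forall (xb : state) (alpha : R),
    exists2 V, nbhs xb V &
      exists M : R, forall x u, V x -> l x u <= alpha -> `|u| <= M.

Definition standing_assumptions (P : 'M[R]_nu)
    (f : state -> input -> mode -> state)
    (Y : mode -> set (state * input))
    (l : state -> input -> mode -> R) :=
  [/\ stochastic P /\ irreducible P /\ aperiodic P,
      (forall th, Y th !=set0 /\ compact (Y th)),
      (forall th, continuous (fun z : state * input => f z.1 z.2 th))
    & (forall th, [/\ (forall x u, 0 <= l x u th),
        lower_semicontinuous (fun z : state * input => (l z.1 z.2 th)%:E)
      & level_bounded_u_loc_unif (fun x u => l x u th)])].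

Definition UPI (P : 'M[R]_nu) (f : state -> input -> mode -> state)
    (Y : mode -> set (state * input)) (kappa : state -> mode -> input)
    (C : mode -> set state) :=
  (forall i, C i !=set0) /\
  forall (i : mode) (x : state), C i x ->
    Y i (x, kappa x i) /\ forall j : mode, 0 < P i j -> C j (f x (kappa x i) i).

(* u_k is F_k-measurable: it is a function of the mode history
   [:: theta_0; ...; theta_k] (x_0 is fixed, the states are determined). *)
Definition policy := nat -> seq mode -> input.

Definition mode_at (th0 : mode) (t : seq mode) (k : nat) : mode :=
  nth th0 (th0 :: t) k.

Definition input_at (pol : policy) (th0 : mode) (t : seq mode) (k : nat) : input :=
  pol k (take k.+1 (th0 :: t)).

Fixpoint state_at (f : state -> input -> mode -> state) (pol : policy)
    (x0 : state) (th0 : mode) (t : seq mode) (k : nat) : state :=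
  match k with
  | 0 => x0
  | k'.+1 => f (state_at f pol x0 th0 t k') (input_at pol th0 t k')
               (mode_at th0 t k')
  end.

Definition admissible (P : 'M[R]_nu) (th0 : mode) (t : seq mode) :=
  path (fun i j : mode => 0 < P i j) th0 t.

(* constraints of P_T(x,th) hold almost surely (on every positive-probability
   scenario of length N) *)
Definition feasible_policy (P : 'M[R]_nu) (f : state -> input -> mode -> state)
    (Y : mode -> set (state * input)) (Xf : mode -> set state) (N : nat)
    (x : state) (th : mode) (pol : policy) :=
  forall t : N.-tuple mode, admissible P th t ->
    (forall k : nat, (k < N)%N ->
       Y (mode_at th t k) (state_at f pol x th t k, input_at pol th t k)) /\
    Xf (last th t) (state_at f pol x th t N).

Definition expected_cost (P : 'M[R]_nu) (f : state -> input -> mode -> state)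
    (l : state -> input -> mode -> R) (Vf : state -> mode -> R) (N : nat)
    (x : state) (th : mode) (pol : policy) : R :=
  \sum_(t : N.-tuple mode)
     (\prod_(k < N) P (mode_at th t k) (mode_at th t k.+1)) *
     (Vf (state_at f pol x th t N) (last th t) +
      \sum_(k < N) l (state_at f pol x th t k) (input_at pol th t k)
                     (mode_at th t k)).

Definition feasibility_domain P f Y Xf N : set (state * mode) :=
  [set z | exists pol, feasible_policy P f Y Xf N z.1 z.2 pol].

Definition optimal_policy P f Y Xf l Vf N x th (pol : policy) :=
  feasible_policy P f Y Xf N x th pol /\
  forall pol', feasible_policy P f Y Xf N x th pol' ->
    expected_cost P f l Vf N x th pol <= expected_cost P f l Vf N x th pol'.

End MPC.

From HB Require Import structures.
From mathcomp Require Import all_boot all_order all_algebra.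
From mathcomp Require Import all_classical all_reals all_analysis.
Import Order.TTheory GRing.Theory Num.Theory.
Import numFieldNormedType.Exports.
Local Open Scope classical_set_scope.
Local Open Scope ring_scope.

Set Implicit Arguments.
Unset Strict Implicit.

(* Shift a feasible policy of horizon M.+1: drop its first input and append
   the terminal law kappa_f.  Along a scenario th' :: s ++ [:: z] from the
   successor, the first M steps replay the original policy on the scenario
   th :: th' :: s, which ends in X^f; the final step applies kappa_f, and
   invariance of X^f makes it admissible and keeps the state in X^f_z. *)

Section ShiftPolicy.
Variables (R : realType) (n m nu : nat).
Variables (f : 'rV[R]_n -> 'rV[R]_m -> 'I_nu -> 'rV[R]_n)
  (kappa_f : 'rV[R]_n -> 'I_nu -> 'rV[R]_m).
Variables (pol : policy R m nu) (x : 'rV[R]_n) (th : 'I_nu) (M : nat).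

(* A history h of the shifted problem starts at the successor mode, so
   th :: h is the corresponding history of the original problem. *)
Definition shift_policy : policy R m nu := fun k h =>
  if (k < M)%N then pol k.+1 (th :: h)
  else kappa_f (state_at f pol x th h M.+1) (last th h).

Variables (th' z : 'I_nu) (s : seq 'I_nu).
Hypothesis size_s : size s = M.

Lemma mode_at_shift k : (k <= M)%N ->
  mode_at th' (rcons s z) k = mode_at th (th' :: s) k.+1.
Proof.
move=> le_kM; rewrite /mode_at -rcons_cons nth_rcons /= size_s ltnS le_kM.
by apply: set_nth_default; rewrite /= size_s ltnS.
Qed.

Lemma take_shift_history k : (k <= M)%N ->
  take k.+1 (th' :: rcons s z) = take k.+1 (th' :: s).
Proof. by move=> le_kM; rewrite /= -cats1 takel_cat ?size_s. Qed.

Lemma input_at_shift k : (k < M)%N ->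
  input_at shift_policy th' (rcons s z) k = input_at pol th (th' :: s) k.+1.
Proof.
by move=> lt_kM; rewrite /input_at /shift_policy lt_kM take_shift_history // ltnW.
Qed.

Lemma input_at_shift_terminal :
  input_at shift_policy th' (rcons s z) M =
  kappa_f (state_at f pol x th (th' :: s) M.+1) (last th (th' :: s)).
Proof.
by rewrite /input_at /shift_policy ltnn take_shift_history // take_oversize //= size_s.
Qed.

Lemma state_at_shift k : (k <= M)%N ->
  state_at f shift_policy (f x (pol 0%N [:: th]) th) th' (rcons s z) k =
  state_at f pol x th (th' :: s) k.+1.
Proof.
elim: k => [//|k IHk] lt_kM /=; have le_kM := ltnW lt_kM.
by rewrite IHk // input_at_shift // mode_at_shift.
Qed.

End ShiftPolicy.

Lemma feasible_shift_policy (R : realType) (n m nu M : nat) (P : 'M[R]_nu)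
    (f : 'rV[R]_n -> 'rV[R]_m -> 'I_nu -> 'rV[R]_n)
    (Y : 'I_nu -> set ('rV[R]_n * 'rV[R]_m)) (Xf : 'I_nu -> set 'rV[R]_n)
    (kappa_f : 'rV[R]_n -> 'I_nu -> 'rV[R]_m) (pol : policy R m nu)
    (x : 'rV[R]_n) (th th' : 'I_nu) :
  UPI P f Y kappa_f Xf ->
  feasible_policy P f Y Xf M.+1 x th pol -> 0 < P th th' ->
  feasible_policy P f Y Xf M.+1 (f x (pol 0%N [:: th]) th) th'
    (shift_policy f kappa_f pol x th M).
Proof.
move=> [_ invXf] feas_pol Pthth' [t size_t] /=.
case/lastP: t size_t => [//|s z]; rewrite size_rcons eqSS => /eqP size_s.
rewrite /admissible rcons_path => /andP[adm_s Pz].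
have size_ts : size (th' :: s) == M.+1 by rewrite /= size_s.
have adm_ts : admissible P th (th' :: s) by rewrite /admissible /= Pthth'.
have [feasY feasXf] := feas_pol (Tuple size_ts) adm_ts.
have [Yterm Xfnext] := invXf _ _ feasXf.
have last_mode : mode_at th' (rcons s z) M = last th (th' :: s).
  by rewrite (mode_at_shift th _ _ size_s) // /mode_at (last_nth th) /= size_s.
split=> [k|]; last first.
  rewrite /= last_rcons state_at_shift // input_at_shift_terminal // last_mode.
  exact: Xfnext.
rewrite ltnS leq_eqVlt => /orP[/eqP-> | lt_kM].
  by rewrite state_at_shift // input_at_shift_terminal // last_mode.
have le_kM := ltnW lt_kM.
rewrite state_at_shift // input_at_shift // (mode_at_shift th _ _ size_s) //.
exact: feasY.
Qed.

Theorem proposition2 (R : realType) (n m nu N : nat)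
  (P : 'M[R]_nu)
  (f : 'rV[R]_n -> 'rV[R]_m -> 'I_nu -> 'rV[R]_n)
  (Y : 'I_nu -> set ('rV[R]_n * 'rV[R]_m))
  (l : 'rV[R]_n -> 'rV[R]_m -> 'I_nu -> R)
  (Vf : 'rV[R]_n -> 'I_nu -> R)
  (Xf : 'I_nu -> set 'rV[R]_n)
  (kappa_f : 'rV[R]_n -> 'I_nu -> 'rV[R]_m)
  (kappa_N : 'rV[R]_n -> 'I_nu -> 'rV[R]_m) :
  (0 < nu)%N -> (0 < N)%N ->
  standing_assumptions P f Y l ->
  UPI P f Y kappa_f Xf ->
  (forall x th, feasibility_domain P f Y Xf N (x, th) ->
     exists pol, optimal_policy P f Y Xf l Vf N x th pol /\
                 pol 0%N [:: th] = kappa_N x th) ->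
  forall (x : 'rV[R]_n) (th : 'I_nu),
    feasibility_domain P f Y Xf N (x, th) ->
    forall th' : 'I_nu, 0 < P th th' ->
      feasibility_domain P f Y Xf N (f x (kappa_N x th) th, th').
Proof.
case: N => [//|M] _ _ _ upiXf optimal x th feasible th' Pthth'.
have [pol [[feas_pol _] first_input]] := optimal x th feasible.
exists (shift_policy f kappa_f pol x th M).
by rewrite /= -first_input; apply: feasible_shift_policy.
Qed.
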